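(* Fix constants $\gamma\in(0,1]$, $c_1>0$, $K\ge1$, $K'\ge1$. There exists $L_0$ depending only on these constants such that the following holds for every $L\ge L_0$. Let $d_0,\dots,d_L$ be positive integers, $X\in\mathbb{R}^{d_0\times n}$, $Y\in\mathbb{R}^{d_L\times n}$ with $K^{-1}\le\|X\|_F\le K$ and $K^{-1}\le\|Y\|_F\le K$, and let $\alpha>0$, $\sigma_1,\dots,\sigma_L>0$ satisfy $\beta:=\alpha\prod_{i=1}^L(\sqrt{d_i}\sigma_i)\le L^K$. Let $\ell(W_1,\dots,W_L)=\frac12\|\alpha W_L\cdots W_1X-Y\|_F^2$ for $W_i\in\mathbb{R}^{d_i\times d_{i-1}}$. Suppose matrices $W_1,\dots,W_L$ are such that $A_i=W_i/(\sqrt{d_i}\sigma_i)$ satisfy $\|A_{j:i}\|\le K'L^3$ for all $1\le i\le j\le L$ and $\|A_{j:i}\|\le K'e^{-c_1L^\gamma}$ for all $1\le i\le j\le L$ with $j-i\ge L/4$, where $A_{j:i}=A_j\cdots A_i$ and $A_{i-1:i}=I$. Then $$0.4\|Y\|_F^2<\ell(W_1,\dots,W_L)<0.6\|Y\|_F^2,\qquad \|\nabla_{W_i}\ell(W_1,\dots,W_L)\|\le(\sqrt{d_i}\sigma_i)^{-1}e^{-0.9c_1L^\gamma}\ \ \forall i\in[L].$$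
   Context: $\|\cdot\|$ is the spectral norm, $\|\cdot\|_F$ the Frobenius norm; $[L]=\{1,\dots,L\}$. *)

From HB Require Import structures.
From mathcomp Require Import all_boot all_order all_algebra.
From mathcomp Require Import all_classical all_reals all_analysis.
Set Implicit Arguments. Unset Strict Implicit. Unset Printing Implicit Defensive.
Import Order.TTheory GRing.Theory Num.Theory.
Local Open Scope ring_scope.
Local Open Scope classical_set_scope.

Definition frob (R : realType) (m n : nat) (A : 'M[R]_(m, n)) : R :=
  Num.sqrt (\sum_(i < m) \sum_(j < n) A i j ^+ 2).

Definition specnorm (R : realType) (m n : nat) (A : 'M[R]_(m, n)) : R :=
  sup [set frob (A *m v) | v in [set v : 'cV[R]_n | frob v <= 1]].

(* mprod d M i j = M_j * ... * M_i : 'M_(d j, d (i-1)) for 1 <= i <= j;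
   for j = i - 1 it is the identity (conform_mx returns 1%:M since the
   dimensions agree). *)
Fixpoint mprod (R : realType) (d : nat -> nat)
  (M : forall k : nat, 'M[R]_(d k, d k.-1)) (i j : nat) : 'M[R]_(d j, d i.-1) :=
  match j with
  | 0 => conform_mx 0 (1%:M : 'M[R]_(d 0))
  | j'.+1 => if (i <= j'.+1)%N then M j'.+1 *m mprod M i j'
             else conform_mx 0 (1%:M : 'M[R]_(d j'.+1))
  end.

Definition normalized (R : realType) (d : nat -> nat) (sigma : nat -> R)
  (W : forall k : nat, 'M[R]_(d k, d k.-1)) : forall k : nat, 'M[R]_(d k, d k.-1) :=
  fun k => (Num.sqrt (d k)%:R * sigma k)^-1 *: W k.

Definition loss (R : realType) (d : nat -> nat) (n L : nat) (alpha : R)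
  (X : 'M[R]_(d 0, n)) (Y : 'M[R]_(d L, n))
  (W : forall k : nat, 'M[R]_(d k, d k.-1)) : R :=
  2^-1 * frob (alpha *: (mprod W 1 L *m X) - Y) ^+ 2.

Definition perturb (R : realType) (d : nat -> nat)
  (W : forall k : nat, 'M[R]_(d k, d k.-1)) (i : nat) (E : 'M[R]_(d i, d i.-1))
  (t : R) : forall k : nat, 'M[R]_(d k, d k.-1) :=
  fun k => W k + (if k == i then t *: conform_mx 0 E else 0).

Definition grad_loss (R : realType) (d : nat -> nat) (n L : nat) (alpha : R)
  (X : 'M[R]_(d 0, n)) (Y : 'M[R]_(d L, n))
  (W : forall k : nat, 'M[R]_(d k, d k.-1)) (i : nat) : 'M[R]_(d i, d i.-1) :=
  \matrix_(a, b)
    derive1 (fun t : R => loss alpha X Y (@perturb R d W i (delta_mx a b) t)) 0.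

(* Write s_k = sqrt(d_k) sigma_k, so that W_j ... W_i = (s_i ... s_j) A_j ... A_i.  The network
   output alpha W_L ... W_1 X then has Frobenius norm at most beta ||A_{L:1}|| ||X||_F
   <= L^K K' K e^{-c1 L^gamma}, negligible against ||Y||_F >= 1/K, so the loss stays close to
   ||Y||_F^2 / 2.  The gradient in W_i is alpha W_{L:i+1}^T (alpha W_{L:1} X - Y) (W_{i-1:1} X)^T.
   The two partial products cover L - 3 layers, so for L >= 6 one of them spans at least L/4
   layers and has norm at most K' e^{-c1 L^gamma}, while the other is at most K' L^3.  Hence the
   gradient is at most s_i^-1 2 K^2 K'^2 L^(K+3) e^{-c1 L^gamma}, and e^{-0.1 c1 L^gamma} absorbs
   the polynomial factor once L is large. *)

From HB Require Import structures.
From mathcomp Require Import all_boot all_order all_algebra.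
From mathcomp Require Import all_classical all_reals all_analysis.
From mathcomp Require Import ring lra zify.
Import Order.TTheory GRing.Theory Num.Theory.
Set Implicit Arguments. Unset Strict Implicit. Unset Printing Implicit Defensive.
Local Open Scope ring_scope.
Local Open Scope classical_set_scope.

Section FrobeniusNorm.
Variable R : realType.
Implicit Types m n p : nat.

Definition frobdot m n (M N : 'M[R]_(m, n)) : R :=
  \sum_(i < m) \sum_(j < n) M i j * N i j.

Lemma frobdotC m n (M N : 'M[R]_(m, n)) : frobdot M N = frobdot N M.
Proof. by apply: eq_bigr => i _; apply: eq_bigr => j _; rewrite mulrC. Qed.

Lemma frobdotDl m n (M N P : 'M[R]_(m, n)) :
  frobdot (M + N) P = frobdot M P + frobdot N P.
Proof.
rewrite /frobdot -big_split; apply: eq_bigr => i _.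
by rewrite -big_split; apply: eq_bigr => j _; rewrite !mxE mulrDl.
Qed.

Lemma frobdotZl m n (c : R) (M P : 'M[R]_(m, n)) :
  frobdot (c *: M) P = c * frobdot M P.
Proof.
rewrite /frobdot mulr_sumr; apply: eq_bigr => i _.
by rewrite mulr_sumr; apply: eq_bigr => j _; rewrite !mxE mulrA.
Qed.

Lemma frobdotDr m n (M N P : 'M[R]_(m, n)) :
  frobdot P (M + N) = frobdot P M + frobdot P N.
Proof. by rewrite frobdotC frobdotDl !(frobdotC P). Qed.

Lemma frobdotZr m n (c : R) (M P : 'M[R]_(m, n)) :
  frobdot P (c *: M) = c * frobdot P M.
Proof. by rewrite frobdotC frobdotZl frobdotC. Qed.

Lemma frobdot0r m n (M : 'M[R]_(m, n)) : frobdot M 0 = 0.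
Proof. by rewrite -(scale0r (0 : 'M[R]_(m, n))) frobdotZr mul0r. Qed.

Lemma frobdot_ge0 m n (M : 'M[R]_(m, n)) : 0 <= frobdot M M.
Proof. by do 2!apply: sumr_ge0 => ? _; rewrite -expr2 sqr_ge0. Qed.

Lemma frobdot_eq0 m n (M : 'M[R]_(m, n)) : frobdot M M = 0 -> M = 0.
Proof.
move=> M0; apply/matrixP => i j; rewrite mxE.
have sq_ge0 k l : 0 <= M k l * M k l by rewrite -expr2 sqr_ge0.
have row0 : \sum_(l < n) M i l * M i l = 0.
  by apply: (psumr_eq0P _ M0) => // k _; exact: sumr_ge0.
have /eqP : M i j * M i j = 0 by apply: (psumr_eq0P _ row0).
by rewrite mulf_eq0 orbb => /eqP.
Qed.

Lemma frobdotDD m n (x y : R) (M N : 'M[R]_(m, n)) :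
  frobdot (x *: M + y *: N) (x *: M + y *: N) =
  x ^+ 2 * frobdot M M + 2 * x * y * frobdot M N + y ^+ 2 * frobdot N N.
Proof. by rewrite !frobdotDl !frobdotDr !frobdotZl !frobdotZr (frobdotC N M); ring. Qed.

Lemma frobdotDZ m n (t : R) (M N : 'M[R]_(m, n)) :
  frobdot (M + t *: N) (M + t *: N) =
  frobdot M M + 2 * t * frobdot M N + t ^+ 2 * frobdot N N.
Proof. by have := frobdotDD 1 t M N; rewrite scale1r expr1n !mul1r mulr1. Qed.

Lemma frobdot_CauchySchwarz m n (M N : 'M[R]_(m, n)) :
  frobdot M N ^+ 2 <= frobdot M M * frobdot N N.
Proof.
have [N0|N0] := eqVneq (frobdot N N) 0.
  by rewrite (frobdot_eq0 N0) !frobdot0r expr0n mulr0.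
have N_gt0 : 0 < frobdot N N by rewrite lt_def N0 frobdot_ge0.
have := frobdot_ge0 (frobdot N N *: M + (- frobdot M N) *: N).
rewrite frobdotDD => expand_ge0.
have : 0 <= frobdot N N * (frobdot M M * frobdot N N - frobdot M N ^+ 2) by nra.
by rewrite pmulr_rge0 // subr_ge0.
Qed.

Lemma frobdot_trace m n (M N : 'M[R]_(m, n)) : frobdot M N = \tr (M^T *m N).
Proof.
rewrite /frobdot /mxtrace exchange_big; apply: eq_bigr => j _; rewrite mxE.
by apply: eq_bigr => i _; rewrite mxE.
Qed.

Lemma frobdot_tr m n (M N : 'M[R]_(m, n)) : frobdot M^T N^T = frobdot M N.
Proof.
by rewrite /frobdot exchange_big; apply: eq_bigr => i _; apply: eq_bigr => j _; rewrite !mxE.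
Qed.

Lemma frobE m n (M : 'M[R]_(m, n)) : frob M = Num.sqrt (frobdot M M).
Proof. by []. Qed.

Lemma frob_ge0 m n (M : 'M[R]_(m, n)) : 0 <= frob M.
Proof. exact: sqrtr_ge0. Qed.

Lemma frob_sqr m n (M : 'M[R]_(m, n)) : frob M ^+ 2 = frobdot M M.
Proof. by rewrite frobE sqr_sqrtr // frobdot_ge0. Qed.

Lemma frob0 m n : frob (0 : 'M[R]_(m, n)) = 0.
Proof. by rewrite frobE frobdot0r sqrtr0. Qed.

Lemma frob_eq0 m n (M : 'M[R]_(m, n)) : frob M = 0 -> M = 0.
Proof. by move=> M0; apply: frobdot_eq0; rewrite -frob_sqr M0 expr0n. Qed.

Lemma frob_le_sqr m n (M : 'M[R]_(m, n)) (c : R) :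
  0 <= c -> frob M ^+ 2 <= c ^+ 2 -> frob M <= c.
Proof. by move=> c0; rewrite ler_pXn2r // nnegrE frob_ge0. Qed.

Lemma frobdot_le m n (M N : 'M[R]_(m, n)) : frobdot M N <= frob M * frob N.
Proof.
have MN0 : 0 <= frob M * frob N by rewrite mulr_ge0 ?frob_ge0.
rewrite (le_trans (ler_norm _)) // -(ler_pXn2r (_ : 0 < 2)%N) ?nnegrE //.
by rewrite real_normK ?num_real // exprMn !frob_sqr frobdot_CauchySchwarz.
Qed.

Lemma frobZ m n (c : R) (M : 'M[R]_(m, n)) : frob (c *: M) = `|c| * frob M.
Proof. by rewrite !frobE frobdotZl frobdotZr mulrA -expr2 sqrtrM ?sqr_ge0 // sqrtr_sqr. Qed.

Lemma frobN m n (M : 'M[R]_(m, n)) : frob (- M) = frob M.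
Proof. by rewrite -scaleN1r frobZ normrN normr1 mul1r. Qed.

Lemma frobD m n (M N : 'M[R]_(m, n)) : frob (M + N) <= frob M + frob N.
Proof.
apply: frob_le_sqr; first by rewrite addr_ge0 ?frob_ge0.
rewrite frob_sqr frobdotDl !frobdotDr (frobdotC N M) sqrrD -!frob_sqr.
by have := frobdot_le M N; lra.
Qed.

Lemma frob_tr m n (M : 'M[R]_(m, n)) : frob M^T = frob M.
Proof. by rewrite !frobE frobdot_tr. Qed.

Lemma frobM m n p (A : 'M[R]_(m, n)) (B : 'M[R]_(n, p)) :
  frob (A *m B) <= frob A * frob B.
Proof.
apply: frob_le_sqr; first by rewrite mulr_ge0 ?frob_ge0.
rewrite exprMn !frob_sqr.
have -> : frobdot A A = \sum_(i < m) frobdot (row i A) (row i A).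
  by apply: eq_bigr => i _; rewrite /frobdot big_ord1; apply: eq_bigr => k _; rewrite !mxE.
have -> : frobdot B B = \sum_(j < p) frobdot (col j B)^T (col j B)^T.
  rewrite /frobdot exchange_big; apply: eq_bigr => j _.
  by rewrite big_ord1; apply: eq_bigr => k _; rewrite !mxE.
rewrite mulr_suml; apply: ler_sum => i _; rewrite mulr_sumr; apply: ler_sum => j _.
have -> : (A *m B) i j = frobdot (row i A) (col j B)^T.
  by rewrite /frobdot big_ord1 mxE; apply: eq_bigr => k _; rewrite !mxE.
by rewrite -expr2 frobdot_CauchySchwarz.
Qed.

Lemma half_sqr_frobB_bounds m n (Z Y : 'M[R]_(m, n)) :
  0 < frob Y -> 11 * frob Z <= frob Y ->
  4 / 10 * frob Y ^+ 2 < 2^-1 * frob (Z - Y) ^+ 2 < 6 / 10 * frob Y ^+ 2.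
Proof.
move=> Y_gt0 Z_small; have Z_ge0 := frob_ge0 Z.
have ZY_le : frob (Z - Y) <= frob Z + frob Y by rewrite -(frobN Y) frobD.
have ZY_ge : frob Y - frob Z <= frob (Z - Y).
  by rewrite lerBlDr -{1}(subrK Z Y) -(opprB Z Y) (le_trans (frobD _ _)) ?frobN.
have ZY_ge0 : 0 <= frob Y - frob Z by lra.
apply/andP; split; nra.
Qed.

End FrobeniusNorm.

Section SpectralNorm.
Variable R : realType.

Definition unit_ball_image m n (A : 'M[R]_(m, n)) : set R :=
  [set frob (A *m v) | v in [set v : 'cV[R]_n | frob v <= 1]].

Lemma unit_ball_image0 m n (A : 'M[R]_(m, n)) : unit_ball_image A 0.
Proof. by exists 0; rewrite /= ?mulmx0 frob0. Qed.

Lemma unit_ball_image_ub m n (A : 'M[R]_(m, n)) : has_ubound (unit_ball_image A).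
Proof.
exists (frob A) => _ [v v1 <-]; apply: le_trans (frobM _ _) _.
by rewrite ler_piMr ?frob_ge0.
Qed.

Lemma specnorm_ge0 m n (A : 'M[R]_(m, n)) : 0 <= specnorm A.
Proof. exact: ub_le_sup (unit_ball_image_ub A) _ (unit_ball_image0 A). Qed.

Lemma specnorm_le m n (A : 'M[R]_(m, n)) (c : R) :
  (forall v : 'cV[R]_n, frob v <= 1 -> frob (A *m v) <= c) -> specnorm A <= c.
Proof.
move=> Ac; apply: ge_sup; first by exists 0; exact: unit_ball_image0.
by move=> _ [v v1 <-]; exact: Ac.
Qed.

Lemma frob_mulmxv m n (A : 'M[R]_(m, n)) (v : 'cV[R]_n) :
  frob (A *m v) <= specnorm A * frob v.
Proof.
have [v0|v0] := eqVneq (frob v) 0.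
  by rewrite (frob_eq0 v0) mulmx0 !frob0 mulr0.
have v_gt0 : 0 < frob v by rewrite lt_def v0 frob_ge0.
have : unit_ball_image A (frob (A *m ((frob v)^-1 *: v))).
  by apply: imageP; rewrite /= frobZ ger0_norm ?invr_ge0 ?frob_ge0 // mulVf.
move/(ub_le_sup (unit_ball_image_ub A)).
by rewrite -scalemxAr frobZ ger0_norm ?invr_ge0 ?frob_ge0 // ler_pdivrMl // mulrC.
Qed.

Lemma frob_mulmx_le m n p (A : 'M[R]_(m, n)) (M : 'M[R]_(n, p)) :
  frob (A *m M) <= specnorm A * frob M.
Proof.
have frob_cols q (N : 'M[R]_(q, p)) : frob N ^+ 2 = \sum_(j < p) frob (col j N) ^+ 2.
  rewrite frob_sqr /frobdot exchange_big; apply: eq_bigr => j _.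
  by rewrite frob_sqr /frobdot; apply: eq_bigr => i _; rewrite big_ord1 !mxE.
apply: frob_le_sqr; first by rewrite mulr_ge0 ?specnorm_ge0 ?frob_ge0.
rewrite exprMn !frob_cols mulr_sumr; apply: ler_sum => j _.
rewrite colE -mulmxA -colE -exprMn ler_pXn2r ?nnegrE ?frob_mulmxv ?frob_ge0 //.
by rewrite mulr_ge0 ?specnorm_ge0 ?frob_ge0.
Qed.

Lemma specnorm_le_frob m n (A : 'M[R]_(m, n)) : specnorm A <= frob A.
Proof.
apply: specnorm_le => v v1; apply: le_trans (frobM _ _) _.
by rewrite ler_piMr ?frob_ge0.
Qed.

Lemma specnorm_tr m n (A : 'M[R]_(m, n)) : specnorm A^T <= specnorm A.
Proof.
apply: specnorm_le => v v1; set y := A^T *m v.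
have y_sqr : frob y ^+ 2 <= frob v * (specnorm A * frob y).
  rewrite frob_sqr {1}/y frobdot_trace trmx_mul trmxK -mulmxA -frobdot_trace.
  by apply: le_trans (frobdot_le _ _) _; rewrite ler_wpM2l ?frob_ge0 ?frob_mulmxv.
have [y0|y0] := eqVneq (frob y) 0; first by rewrite y0 specnorm_ge0.
have y_gt0 : 0 < frob y by rewrite lt_def y0 frob_ge0.
rewrite -(ler_pM2r y_gt0) -expr2 (le_trans y_sqr) // mulrA ler_wpM2r ?frob_ge0 //.
by rewrite ler_piMl ?specnorm_ge0.
Qed.

Lemma specnormZ_le m n (c : R) (A : 'M[R]_(m, n)) :
  0 <= c -> specnorm (c *: A) <= c * specnorm A.
Proof.
move=> c0; apply: specnorm_le => v v1.
rewrite -scalemxAl frobZ ger0_norm // ler_wpM2l // (le_trans (frob_mulmxv _ _)) //.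
by rewrite ler_piMr ?specnorm_ge0.
Qed.

Lemma specnorm1_le n : specnorm (1%:M : 'M[R]_n) <= 1.
Proof. by apply: specnorm_le => v; rewrite mul1mx. Qed.

Lemma frob_trmx_mulmx_le m n p q r (B : 'M[R]_(m, n)) (M : 'M[R]_(m, p))
    (C : 'M[R]_(q, r)) (X : 'M[R]_(r, p)) :
  frob (B^T *m M *m (C *m X)^T) <= specnorm B * specnorm C * (frob M * frob X).
Proof.
rewrite -mulmxA -mulrA; apply: le_trans (frob_mulmx_le _ _) _.
apply: ler_pM; rewrite ?specnorm_ge0 ?frob_ge0 ?specnorm_tr //.
rewrite -frob_tr trmx_mul trmxK -mulmxA; apply: le_trans (frob_mulmx_le _ _) _.
rewrite ler_wpM2l ?specnorm_ge0 // mulrC; apply: le_trans (frobM _ _) _.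
by rewrite frob_tr.
Qed.

End SpectralNorm.

Section LayerProducts.
Variables (R : realType) (d : nat -> nat).
Implicit Types M : forall k, 'M[R]_(d k, d k.-1).

Lemma mprodS M i j : (i <= j.+1)%N -> mprod M i j.+1 = M j.+1 *m mprod M i j.
Proof. by move=> ij /=; rewrite ij. Qed.

Lemma mprod_id M i : mprod M i.+1 i = 1%:M.
Proof. by case: i => [|i] /=; rewrite ?ltnn conform_mx_id. Qed.

Lemma mprodZ M (c : nat -> R) i j : (0 < i)%N ->
  mprod (fun k => c k *: M k) i j = (\prod_(i <= k < j.+1) c k) *: mprod M i j.
Proof.
move=> i_gt0; elim: j => [|j IH] /=; first by rewrite big_geq ?scale1r.
case: ifP => [ij|/negbT]; last by rewrite -ltnNge => ji; rewrite big_geq ?scale1r.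
rewrite IH [in RHS]big_nat_recr //= -scalemxAl -scalemxAr scalerA.
by congr (_ *: _); exact: mulrC.
Qed.

Lemma mprod_perturb_le M i (E : 'M[R]_(d i.+1, d i)) t j :
  (j <= i)%N -> mprod (perturb M E t) 1 j = mprod M 1 j.
Proof.
elim: j => [|j IH] // ji; rewrite !mprodS // IH ?(ltnW ji) // /perturb.
by rewrite eqSS ltn_eqF // addr0.
Qed.

Lemma mprod_perturb_gt M i (E : 'M[R]_(d i.+1, d i)) t j : (i < j)%N ->
  mprod (perturb M E t) 1 j = mprod M 1 j + t *: (mprod M i.+2 j *m E *m mprod M 1 i).
Proof.
elim: j => [|j IH] // /[!ltnS] /[dup] ij; rewrite leq_eqVlt => /orP [/eqP <-|ij'].
  rewrite mprod_id mul1mx !mprodS // mprod_perturb_le // /perturb eqxx conform_mx_id.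
  by rewrite mulmxDl -scalemxAl.
rewrite !mprodS // IH // /perturb eqSS gtn_eqF // addr0 mulmxDr -scalemxAr !mulmxA.
by rewrite -mprodS.
Qed.

End LayerProducts.

Section LossGradient.
Variable R : realType.

Lemma frobdot_delta m n (M : 'M[R]_(m, n)) a b : frobdot M (delta_mx a b) = M a b.
Proof.
rewrite /frobdot (bigD1 a) //= (bigD1 b) //= !mxE !eqxx mulr1 !big1 ?addr0 //.
  by move=> i ia; apply: big1 => j _; rewrite mxE (negbTE ia) mulr0.
by move=> j jb; rewrite mxE (negbTE jb) andbF mulr0.
Qed.

Lemma frobdot_mulmx m n p q (M : 'M[R]_(m, q)) (A : 'M[R]_(m, n)) (N : 'M[R]_(n, p))
    (B : 'M[R]_(p, q)) :
  frobdot M (A *m N *m B) = frobdot (A^T *m M *m B^T) N.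
Proof.
rewrite !frobdot_trace !trmx_mul !trmxK -[in RHS]mulmxA [in RHS]mxtrace_mulC.
by rewrite !mulmxA.
Qed.

Lemma derive1_quadratic (a b c : R) :
  derive1 (fun t : R => a + t * b + t ^+ 2 * c) 0 = b.
Proof.
rewrite derive1E; apply: derive_val; apply: is_derive_eq.
by rewrite add0r mul1r !scaler0 add0r !scale0r !addr0 scaler0 !addr0 /GRing.scale /= mulr1.
Qed.

Lemma grad_lossE (d : nat -> nat) n L alpha (X : 'M[R]_(d 0, n)) (Y : 'M[R]_(d L, n))
    (W : forall k, 'M[R]_(d k, d k.-1)) i : (i < L)%N ->
  grad_loss alpha X Y W i.+1 = alpha *: ((mprod W i.+2 L)^T *m
      (alpha *: (mprod W 1 L *m X) - Y) *m (mprod W 1 i *m X)^T).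
Proof.
move=> iL; apply/matrixP => a b; rewrite mxE [RHS]mxE.
set Rm := alpha *: (mprod W 1 L *m X) - Y.
set N := alpha *: (mprod W i.+2 L *m delta_mx a b *m (mprod W 1 i *m X)).
have -> : (fun t => loss alpha X Y (perturb W (delta_mx a b) t)) =
    (fun t => 2^-1 * frobdot Rm Rm + t * frobdot Rm N + t ^+ 2 * (2^-1 * frobdot N N)).
  apply: funext => t; rewrite /loss mprod_perturb_gt // frob_sqr.
  have -> : alpha *: ((mprod W 1 L + t *: (mprod W i.+2 L *m delta_mx a b *m mprod W 1 i)) *m X)
      - Y = Rm + t *: N.
    by rewrite /N mulmxDl scalerDr -scalemxAl -!mulmxA !scalerA [t * _]mulrC addrAC.
  by rewrite frobdotDZ; field.
by rewrite derive1_quadratic /N frobdotZr frobdot_mulmx frobdot_delta.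
Qed.

End LossGradient.

Section ExpDominatesPowers.
Variable R : realType.

Lemma eventually_natpow_expRN_le (gamma b c : R) (p : nat) :
  0 < gamma -> 0 < b -> 0 < c ->
  exists L0 : nat, forall L : nat, (L0 <= L)%N ->
    L%:R ^+ p * expR (- (b * L%:R `^ gamma)) <= c.
Proof.
move=> gamma_gt0 b_gt0 c_gt0.
pose k := Num.Def.archi_bound ((p.+1)%:R / gamma); pose m := k.+1.
have gamma_m : (p.+1)%:R <= gamma * m%:R.
  rewrite mulrC -ler_pdivrMr // ltW //; apply: lt_le_trans (archi_boundP _) _.
    by rewrite divr_ge0 ?ltW.
  by rewrite ler_nat.
pose q := (m`!)%:R / b ^+ m.
have q_gt0 : 0 < q by rewrite divr_gt0 ?exprn_gt0 // ltr0n fact_gt0.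
exists (Num.Def.archi_bound (q / c)).+1 => L L0L; set x := L%:R.
have qx : q < c * x.
  rewrite mulrC -ltr_pdivrMr //; apply: lt_le_trans (archi_boundP _) _.
    by rewrite divr_ge0 ?ltW.
  by rewrite ler_nat ltnW.
have x_ge1 : 1 <= x by rewrite ler1n (leq_trans (ltn0Sn _) L0L).
have y_ge0 : 0 <= b * x `^ gamma by rewrite mulr_ge0 ?powR_ge0 ?ltW.
have expR_ge : b ^+ m * x ^+ p.+1 / (m`!)%:R <= expR (b * x `^ gamma).
  apply: le_trans (expR_ge1Dxn k y_ge0); apply: ler_wpDl => //.
  rewrite ler_wpM2r ?invr_ge0 //.
  rewrite exprMn ler_pM2l ?exprn_gt0 // -(powR_mulrn m (powR_ge0 x gamma)) -powRrM.
  by rewrite -powR_mulrn ?(le_trans ler01) // ler_powR.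
rewrite expRN ler_pdivrMr ?expR_gt0 // (le_trans _ (ler_wpM2l (ltW c_gt0) expR_ge)) //.
have -> : c * (b ^+ m * x ^+ p.+1 / (m`!)%:R) = x ^+ p * (c * x / q).
  by rewrite /q exprS; field; rewrite pnatr_eq0 -lt0n fact_gt0 expf_neq0 ?gt_eqF.
by rewrite ler_peMr ?exprn_ge0 ?(le_trans ler01) // ler_pdivlMr // mul1r ltW.
Qed.

Lemma eventually_powR_expRN_le (gamma b c p : R) :
  0 < gamma -> 0 < b -> 0 < c ->
  exists L0 : nat, forall L : nat, (L0 <= L)%N ->
    L%:R `^ p * expR (- (b * L%:R `^ gamma)) <= c.
Proof.
move=> gamma_gt0 b_gt0 c_gt0.
pose P := Num.Def.archi_bound p.
have [L1 L1_le] := eventually_natpow_expRN_le P gamma_gt0 b_gt0 c_gt0.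
exists (maxn L1 1) => L; rewrite geq_max => /andP [L1L L_gt0].
apply: le_trans (L1_le L L1L); rewrite ler_wpM2r ?expR_ge0 //.
rewrite -powR_mulrn ?ler0n // ler_powR ?ler1n // ltW //.
have [p_ge0|p_lt0] := lerP 0 p; first exact: archi_boundP.
exact: lt_le_trans p_lt0 (ler0n _ _).
Qed.

Lemma eventually_decay_small (gamma c1 K C : R) :
  0 < gamma -> 0 < c1 -> 0 < C ->
  exists L0 : nat, forall L : nat, (L0 <= L)%N -> (6 <= L)%N /\
    L%:R `^ K * expR (- (c1 * L%:R `^ gamma)) * L%:R ^+ 3
      <= C * expR (- (9 / 10 * c1 * L%:R `^ gamma)).
Proof.
move=> gamma_gt0 c1_gt0 C_gt0; have c1_10_gt0 : 0 < c1 / 10 by rewrite divr_gt0.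
have [L1 L1_le] := eventually_powR_expRN_le (K + 3) gamma_gt0 c1_10_gt0 C_gt0.
exists (maxn L1 6) => L; rewrite geq_max => /andP [/(L1_le L) decay L_ge6]; split=> //.
set x := L%:R `^ gamma in decay *.
have -> : expR (- (c1 * x)) = expR (- (c1 / 10 * x)) * expR (- (9 / 10 * c1 * x)).
  by rewrite -expRD; congr expR; field.
have L_neq0 : L != 0%N by rewrite -lt0n (leq_trans _ L_ge6).
rewrite powRD ?powR_mulrn ?ler0n // in decay; last by rewrite pnatr_eq0 L_neq0 implybT.
by rewrite mulrAC mulrA ler_wpM2r ?expR_ge0.
Qed.

End ExpDominatesPowers.

(* [u] stands for beta e^{-c1 L^gamma} and [l3] for L^3.  The factor 11 makes the network output
   at most ||Y||_F / 11, which is what the loss bounds need. *)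
Section Constants.
Variables (R : realFieldType) (K K' u l3 e9 : R).
Hypotheses (K_ge1 : 1 <= K) (K'_ge1 : 1 <= K') (u_ge0 : 0 <= u) (l3_ge1 : 1 <= l3).
Hypothesis small : u * l3 <= (11 * K ^+ 2 * K' ^+ 2)^-1 * e9.

Let K_gt0 : 0 < K := lt_le_trans ltr01 K_ge1.
Let K'_gt0 : 0 < K' := lt_le_trans ltr01 K'_ge1.

Lemma output_constant_le : e9 <= 1 -> 11 * (u * K' * K) <= K^-1.
Proof.
move=> e9_le1; have u_le : u <= (11 * K ^+ 2 * K' ^+ 2)^-1.
  apply: le_trans (ler_peMr u_ge0 l3_ge1) (le_trans small _).
  by rewrite ler_piMr // invr_ge0 !mulr_ge0 ?exprn_ge0 ?ltW.
apply: le_trans (_ : 11 * ((11 * K ^+ 2 * K' ^+ 2)^-1 * K' * K) <= _).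
  by rewrite ler_pM2l // !ler_pM2r.
have -> : 11 * ((11 * K ^+ 2 * K' ^+ 2)^-1 * K' * K) = K^-1 / K'.
  by field; rewrite !gt_eqF.
by rewrite ler_pdivrMr // ler_peMr // invr_ge0 ltW.
Qed.

Lemma gradient_constant_le r : 0 <= r -> r <= 2 * K -> u * l3 * K' ^+ 2 * (K * r) <= e9.
Proof.
move=> r_ge0 r_le; have c_gt0 : 0 < (11 * K ^+ 2 * K' ^+ 2)^-1.
  by rewrite invr_gt0 !mulr_gt0 ?exprn_gt0.
have ul3_ge0 : 0 <= u * l3 by rewrite mulr_ge0 // (le_trans ler01).
have e9_ge0 : 0 <= e9 by rewrite -(pmulr_rge0 _ c_gt0) (le_trans ul3_ge0).
apply: le_trans (_ : (11 * K ^+ 2 * K' ^+ 2)^-1 * e9 * (2 * K ^+ 2 * K' ^+ 2) <= _).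
  rewrite -[X in X <= _]mulrA; apply: ler_pM => //.
    exact: mulr_ge0 (exprn_ge0 _ (ltW K'_gt0)) (mulr_ge0 (ltW K_gt0) r_ge0).
  have -> : 2 * K ^+ 2 * K' ^+ 2 = K' ^+ 2 * (K * (2 * K)) by ring.
  by rewrite !ler_pM2l ?exprn_gt0.
have -> : (11 * K ^+ 2 * K' ^+ 2)^-1 * e9 * (2 * K ^+ 2 * K' ^+ 2) = 2 / 11 * e9.
  by field; rewrite !gt_eqF.
by rewrite ler_piMl // ler_pdivrMr // mul1r ler_nat.
Qed.

End Constants.

Section DeepLinearNetwork.
Variables (R : realType) (d : nat -> nat) (n L : nat).
Variables (X : 'M[R]_(d 0, n)) (Y : 'M[R]_(d L, n)) (alpha : R) (sigma : nat -> R).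
Variable W : forall k, 'M[R]_(d k, d k.-1).
(* [b] bounds beta = alpha * \prod_k s k, [e] stands for e^{-c1 L^gamma} and, further down,
   [e9] for e^{-0.9 c1 L^gamma}. *)
Variables (K K' b e : R).

Local Notation s k := (Num.sqrt (d k)%:R * sigma k).
Local Notation A := (normalized sigma W).
Local Notation output := (alpha *: (mprod W 1 L *m X)).

Hypothesis d_gt0 : forall i, (i <= L)%N -> (0 < d i)%N.
Hypothesis sigma_gt0 : forall i, (1 <= i <= L)%N -> 0 < sigma i.
Hypothesis alpha_gt0 : 0 < alpha.
Hypothesis beta_le : alpha * \prod_(1 <= i < L.+1) s i <= b.
Hypothesis frobX_le : frob X <= K.
Hypothesis L_ge6 : (6 <= L)%N.
Hypothesis A_decay : forall i j, (1 <= i)%N -> (i <= j)%N -> (j <= L)%N ->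
  (L%:R / 4 : R) <= (j - i)%:R -> specnorm (mprod A i j) <= K' * e.

Lemma layer_scale_gt0 k : (1 <= k <= L)%N -> 0 < s k.
Proof.
by case/andP=> k_gt0 kL; rewrite mulr_gt0 ?sigma_gt0 ?k_gt0 // sqrtr_gt0 ltr0n d_gt0.
Qed.

Lemma layer_scale_prod_gt0 i j : (0 < i)%N -> (j <= L)%N -> 0 < \prod_(i <= k < j.+1) s k.
Proof.
move=> i_gt0 jL; rewrite big_nat_cond prodr_gt0 // => k /andP [/andP [ik kj] _].
by rewrite layer_scale_gt0 // (leq_trans i_gt0 ik) (leq_trans _ jL).
Qed.

Lemma specnorm_mprod_le i j : (0 < i)%N -> (j <= L)%N ->
  specnorm (mprod W i j) <= (\prod_(i <= k < j.+1) s k) * specnorm (mprod A i j).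
Proof.
move=> i_gt0 jL; have P_gt0 := layer_scale_prod_gt0 i_gt0 jL.
have -> : mprod W i j = (\prod_(i <= k < j.+1) s k) *: mprod A i j.
  by rewrite /normalized mprodZ // prodfV scalerA mulfV ?gt_eqF // scale1r.
exact/specnormZ_le/ltW.
Qed.

Lemma quarter_le_natr (k : nat) : ((L%:R / 4 : R) <= k%:R) = (L <= 4 * k)%N.
Proof. by rewrite ler_pdivrMr ?ltr0n // -natrM ler_nat mulnC. Qed.

Lemma specnorm_mprodA_full_le : specnorm (mprod A 1 L) <= K' * e.
Proof. by apply: A_decay; rewrite // ?quarter_le_natr; lia. Qed.

Lemma frob_output_le : frob output <= b * (K' * e) * K.
Proof.
have AL := specnorm_mprodA_full_le.
have WL : specnorm (mprod W 1 L) <= (\prod_(1 <= k < L.+1) s k) * (K' * e).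
  apply: le_trans (specnorm_mprod_le (ltn0Sn 0) (leqnn L)) _.
  by apply: ler_wpM2l AL; rewrite ltW ?layer_scale_prod_gt0.
have Ee_ge0 : 0 <= K' * e * K.
  apply: mulr_ge0; first exact: le_trans (specnorm_ge0 _) AL.
  exact: le_trans (frob_ge0 X) frobX_le.
rewrite frobZ (ger0_norm (ltW alpha_gt0)).
apply: le_trans (_ : alpha * (specnorm (mprod W 1 L) * frob X) <= _).
  by apply: ler_wpM2l; [exact: ltW | exact: frob_mulmx_le].
apply: le_trans (_ : alpha * ((\prod_(1 <= k < L.+1) s k) * (K' * e) * K) <= _).
  apply: ler_wpM2l; first exact: ltW.
  exact: ler_pM (specnorm_ge0 _) (frob_ge0 _) WL frobX_le.
by have := ler_wpM2r Ee_ge0 beta_le; rewrite !mulrA; apply.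
Qed.

Hypothesis K'_ge1 : 1 <= K'.
Hypothesis A_le : forall i j, (1 <= i)%N -> (i <= j)%N -> (j <= L)%N ->
  specnorm (mprod A i j) <= K' * L%:R ^+ 3.

Lemma specnorm_mprodA_le i j : (0 < i)%N -> (i <= j.+1)%N -> (j <= L)%N ->
  specnorm (mprod A i j) <= K' * L%:R ^+ 3.
Proof.
move=> i_gt0; rewrite leq_eqVlt => /orP [/eqP ->|]; last by rewrite ltnS; exact: A_le.
rewrite mprod_id => _; apply: le_trans; first exact: specnorm1_le.
by rewrite mulr_ege1 // exprn_ege1 // ler1n (leq_trans _ L_ge6).
Qed.

Lemma specnorm_mprodA_split_le i : (i < L)%N ->
  specnorm (mprod A i.+2 L) * specnorm (mprod A 1 i) <= (K' * L%:R ^+ 3) * (K' * e).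
Proof.
move=> iL; have [Bspan|Cspan] := leqP L (4 * (L - i.+2)).
  rewrite [X in _ <= X]mulrC; apply: ler_pM; rewrite ?specnorm_ge0 //.
    by apply: A_decay; rewrite ?quarter_le_natr //; lia.
  by rewrite specnorm_mprodA_le // ltnW.
apply: ler_pM; rewrite ?specnorm_ge0 //; first exact: specnorm_mprodA_le.
by apply: A_decay; rewrite ?quarter_le_natr //; lia.
Qed.

Lemma specnorm_grad_le i : (i < L)%N ->
  specnorm (grad_loss alpha X Y W i.+1) <=
  b / s i.+1 * ((K' * L%:R ^+ 3) * (K' * e)) * (K * frob (output - Y)).
Proof.
move=> iL; rewrite grad_lossE //.
set Rm := alpha *: _ - Y.
set PB := \prod_(i.+2 <= k < L.+1) s k; set PC := \prod_(1 <= k < i.+1) s k.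
set aB := specnorm (mprod A i.+2 L); set aC := specnorm (mprod A 1 i).
have s_gt0 : 0 < s i.+1 by rewrite layer_scale_gt0.
have K_ge0 : 0 <= K := le_trans (frob_ge0 X) frobX_le.
have PB_gt0 : 0 < PB by rewrite layer_scale_prod_gt0.
have PC_gt0 : 0 < PC by rewrite layer_scale_prod_gt0 // ltnW.
have prod_split : \prod_(1 <= k < L.+1) s k = PC * s i.+1 * PB.
  rewrite (@big_cat_nat _ _ _ i.+1) //=; last exact: leqW.
  by rewrite [X in _ * X]big_ltn // mulrA.
apply: le_trans (specnorm_le_frob _) _; rewrite frobZ (ger0_norm (ltW alpha_gt0)).
apply: le_trans (ler_wpM2l (ltW alpha_gt0) (frob_trmx_mulmx_le _ _ _ _)) _.
apply: le_trans (_ : alpha * ((PB * aB) * (PC * aC) * (K * frob Rm)) <= _).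
  apply: ler_wpM2l; first exact: ltW.
  rewrite [frob Rm * _]mulrC; apply: ler_pM; rewrite ?mulr_ge0 ?specnorm_ge0 ?frob_ge0 //.
    apply: ler_pM; rewrite ?specnorm_ge0 //.
      exact: specnorm_mprod_le (ltn0Sn i.+1) (leqnn L).
    exact: specnorm_mprod_le (ltn0Sn 0) (ltnW iL).
  by apply: ler_wpM2r frobX_le; apply: frob_ge0.
have -> : alpha * ((PB * aB) * (PC * aC) * (K * frob Rm)) =
    alpha * \prod_(1 <= k < L.+1) s k / s i.+1 * (aB * aC) * (K * frob Rm).
  by rewrite prod_split; field; rewrite -negb_or -mulf_eq0 mulrC gt_eqF.
apply: ler_wpM2r; first by rewrite mulr_ge0 ?frob_ge0.
apply: ler_pM.
- have P_gt0 := layer_scale_prod_gt0 (ltn0Sn 0) (leqnn L).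
  exact: divr_ge0 (mulr_ge0 (ltW alpha_gt0) (ltW P_gt0)) (ltW s_gt0).
- by rewrite mulr_ge0 ?specnorm_ge0.
- by apply: ler_wpM2r beta_le; rewrite invr_ge0 ltW.
- exact: specnorm_mprodA_split_le.
Qed.

Variable e9 : R.
Hypotheses (K_ge1 : 1 <= K) (Y_ge : K^-1 <= frob Y) (Y_le : frob Y <= K) (e9_le1 : e9 <= 1).
Hypothesis decay_small : b * e * L%:R ^+ 3 <= (11 * K ^+ 2 * K' ^+ 2)^-1 * e9.

Let L3_ge1 : 1 <= L%:R ^+ 3 :> R.
Proof. by rewrite exprn_ege1 // ler1n (leq_trans _ L_ge6). Qed.

Let be_ge0 : 0 <= b * e.
Proof.
have P_gt0 := layer_scale_prod_gt0 (ltn0Sn 0) (leqnn L).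
have b_gt0 : 0 < b := lt_le_trans (mulr_gt0 alpha_gt0 P_gt0) beta_le.
have K'e_ge0 := le_trans (specnorm_ge0 _) specnorm_mprodA_full_le.
apply: mulr_ge0; first exact: ltW.
by rewrite -(pmulr_rge0 _ (lt_le_trans ltr01 K'_ge1)).
Qed.

Lemma frob_output_small : 11 * frob output <= frob Y.
Proof.
apply: le_trans _ Y_ge.
apply: le_trans _ (output_constant_le K_ge1 K'_ge1 be_ge0 L3_ge1 decay_small e9_le1).
by rewrite ler_pM2l // (le_trans frob_output_le) // [K' * e]mulrC mulrA.
Qed.

Lemma loss_near_half : 4 / 10 * frob Y ^+ 2 < loss alpha X Y W < 6 / 10 * frob Y ^+ 2.
Proof.
apply: half_sqr_frobB_bounds frob_output_small.
by rewrite (lt_le_trans _ Y_ge) // invr_gt0 (lt_le_trans ltr01).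
Qed.

Lemma specnorm_grad_loss_le i : (1 <= i <= L)%N ->
  specnorm (grad_loss alpha X Y W i) <= (s i)^-1 * e9.
Proof.
case: i => [//|i] /= iL; apply: le_trans (specnorm_grad_le iL) _.
set r := frob _; have -> : b / s i.+1 * (K' * L%:R ^+ 3 * (K' * e)) * (K * r) =
    (s i.+1)^-1 * (b * e * L%:R ^+ 3 * K' ^+ 2 * (K * r)) by ring.
apply: ler_wpM2l; first by rewrite invr_ge0 ltW ?layer_scale_gt0.
apply: (gradient_constant_le K_ge1 K'_ge1 be_ge0 L3_ge1 decay_small); first exact: frob_ge0.
apply: le_trans (_ : _ <= frob output + frob Y) _.
  by rewrite /r -(frobN Y) frobD.
rewrite mulr_natl mulr2n lerD //; apply: le_trans _ Y_le; apply: le_trans _ frob_output_small.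
by rewrite ler_peMl ?frob_ge0 ?ler1n.
Qed.

End DeepLinearNetwork.

Theorem lemma5p4 (R : realType) (gamma c1 K K' : R) :
  0 < gamma <= 1 -> 0 < c1 -> 1 <= K -> 1 <= K' ->
  exists L0 : nat, forall L : nat, (L0 <= L)%N ->
  forall (d : nat -> nat) (n : nat), (forall i, (i <= L)%N -> (0 < d i)%N) ->
  forall (X : 'M[R]_(d 0, n)) (Y : 'M[R]_(d L, n)),
  K^-1 <= frob X <= K -> K^-1 <= frob Y <= K ->
  forall (alpha : R) (sigma : nat -> R),
  0 < alpha -> (forall i, (1 <= i <= L)%N -> 0 < sigma i) ->
  alpha * \prod_(1 <= i < L.+1) (Num.sqrt (d i)%:R * sigma i) <= L%:R `^ K ->
  forall W : forall k : nat, 'M[R]_(d k, d k.-1),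
  (forall i j, (1 <= i)%N -> (i <= j)%N -> (j <= L)%N ->
     specnorm (mprod (normalized sigma W) i j) <= K' * L%:R ^+ 3) ->
  (forall i j, (1 <= i)%N -> (i <= j)%N -> (j <= L)%N -> (L%:R / 4 : R) <= (j - i)%:R ->
     specnorm (mprod (normalized sigma W) i j) <= K' * expR (- (c1 * L%:R `^ gamma))) ->
  (4 / 10 * frob Y ^+ 2 < loss alpha X Y W < 6 / 10 * frob Y ^+ 2) /\
  (forall i, (1 <= i <= L)%N ->
     specnorm (grad_loss alpha X Y W i)
       <= (Num.sqrt (d i)%:R * sigma i)^-1 * expR (- (9 / 10 * c1 * L%:R `^ gamma))).
Proof.
move=> /andP [gamma_gt0 _] c1_gt0 K_ge1 K'_ge1.
have C_gt0 : 0 < (11 * K ^+ 2 * K' ^+ 2)^-1.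
  by rewrite invr_gt0 !mulr_gt0 ?exprn_gt0 // (lt_le_trans ltr01).
have [L0 L0_small] := eventually_decay_small K gamma_gt0 c1_gt0 C_gt0.
exists L0 => L /(L0_small L) [L_ge6 small] d n d_gt0 X Y /andP [_ X_le] /andP [Y_ge Y_le].
move=> alpha sigma alpha_gt0 sigma_gt0 beta_le W A_le A_decay.
have e9_le1 : expR (- (9 / 10 * c1 * L%:R `^ gamma)) <= 1.
  by rewrite expR_le1 oppr_le0 !mulr_ge0 ?powR_ge0 ?(ltW c1_gt0).
split.
  exact: (loss_near_half d_gt0 sigma_gt0 alpha_gt0 beta_le X_le L_ge6 A_decay K'_ge1
    K_ge1 Y_ge e9_le1 small).
move=> i; exact: (specnorm_grad_loss_le d_gt0 sigma_gt0 alpha_gt0 beta_le X_le L_ge6 A_decay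
  K'_ge1 A_le K_ge1 Y_ge Y_le e9_le1 small).
Qed.
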